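(* Let $k,d\geq1$ and $L\geq4(k+1)d$, and let $\mathcal{T}^{d+1}$ be the teacher class defined in the context, with $H_\bullet=\{(2,0),(1,1)\}$. For every (possibly randomized) DFF algorithm $\mathcal{A}$, \[M^L_k(\mathcal{A},\mathcal{T}^{d+1},H_\bullet)\geq(k+1)d-1.\]
   Context: Setting. A teacher over $\mathcal{X},\mathcal{Y},\Phi$ ($\bot$ a null symbol) is a pair $T=(\ell,\psi)$ with $\ell:\mathcal{X}\to\mathcal{Y}$ and $\psi:\mathcal{X}\times\mathcal{X}\to\Phi\cup\{\bot\}$ such that whenever $\ell(x)\neq\ell(\hat x)$, $\phi:=\psi(x,\hat x)\in\Phi$, $\phi(x)=1$ and $\phi(\hat x)=0$. A teacher class is a set of teachers. A history is a non-empty $H\subseteq\mathcal{X}\times\mathcal{Y}$; a teacher $(\ell,\psi)$ is consistent with $H$ if $\ell(x)=y$ for all $(x,y)\in H$; $\mathcal{T}_H$ is the set of teachers in $\mathcal{T}$ consistent with $H$. DFF protocol. A DFF algorithm is given $H$ in advance. In each round $t$: an example $x_t$ arrives; the algorithm outputs $(\hat x_t,\hat y_t)\in H\cup\{(x_s,y_s):s<t\}$ (predicted label $\hat y_t$, explanation $\hat x_t$); if $\hat y_t=y_t$ (the provided label of $x_t$) it learns only that it was correct; otherwise (a mistake) it receives $y_t$ and a feature $\phi_t$. Non-realizable mistake bound with adaptive adversary. An interaction over $L$ rounds produces $S=((x_t,y_t,\hat x_t,\hat y_t,\phi_t))_{t\in[L]}$, with $\phi_t=\bot$ when $\hat y_t=y_t$.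 An adversary, in each round $t$, chooses $(x_t,y_t,\psi_t)$ with $\psi_t:\mathcal{X}\times\mathcal{X}\to\Phi\cup\{\bot\}$ as a function of the past interaction $S_{t-1}$; then the algorithm chooses $(\hat x_t,\hat y_t)$ (possibly randomly) as a function of $S_{t-1}$ and $x_t$; then, if $\hat y_t\neq y_t$, $\phi_t=\psi_t(x_t,\hat x_t)$ is revealed together with $y_t$. $S$ is $k$-consistent with a teacher $(f,\psi)$ if there is $E\subseteq[L]$, $|E|\leq k$, such that for all $t\in[L]\setminus E$, $f(x_t)=y_t$ and, if $\hat y_t\neq y_t$, $\psi(x_t,\hat x_t)=\phi_t$. $M^L_k(\mathcal{A},\mathcal{T},H)$ is the supremum, over all adversaries whose interaction with $\mathcal{A}$ produces with probability $1$ a sequence that is $k$-consistent with some teacher in $\mathcal{T}_H$, of the expected number of mistakes of $\mathcal{A}$ over $L$ rounds. Construction. $\mathcal{X}=\mathbb{N}=\{1,2,\dots\}$, $\mathcal{Y}=\{0,1\}$, $\Phi=\{0,1\}^{\mathcal{X}}$. For $i\geq0$ let $\mathcal{X}_i=\{2^i,2^i+1,\dots,2^{i+1}-1\}$. For $i\geq1$, $\mathcal{F}^d_i$ is the set of all $f:\mathcal{X}\to\{0,1\}$ with $f(1)=1$ and $f(x)=0$ for all $x\notin\mathcal{X}_i\cup\{1\}$ (arbitrary on $\mathcal{X}_i$). Let $p_i$ be a prime with $p_i\geq2^{|\mathcal{X}_i|}$ and fix an injective map $b_i:\mathcal{F}^d_i\to\mathbb{F}_{p_i}$. For $\bar c=(c_0,\dots,c_{d-1})\in\mathbb{F}_{p_i}^d$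 let $P'[\bar c](z)=(c_0+\sum_{j=1}^{d-1}c_jz^j)\bmod p_i$ and $P[\bar c]:\mathcal{X}_i\to\mathbb{N}$, $P[\bar c](x)=2^{i+1}+P'[\bar c](x-2^i+1)$ (viewing $P'$ values in $\{0,\dots,p_i-1\}$). For $x_1,\dots,x_l\in\mathcal{X}$ let $\mathbb{I}[x_1,\dots,x_l]$ be the feature equal to $1$ exactly on $\{x_1,\dots,x_l\}$. For $f\in\mathcal{F}^d_i$ and $\bar a:\mathcal{X}_i\times\{0,1\}\to\mathbb{F}^d_{p_i}$ define $\psi^f_{\bar a}(x,\hat x)=\mathbb{I}[x,\,P[\bar a(\hat x,f(x))](x)]$ if $x,\hat x\in\mathcal{X}_i$, and $\psi^f_{\bar a}(x,\hat x)=\mathbb{I}[x]$ otherwise. Let $\Psi_f=\{\psi^f_{\bar a}:\bar a:\mathcal{X}_i\times\{0,1\}\to\mathbb{F}^d_{p_i}$ such that for all $\hat x\in\mathcal{X}_i$ with $f(\hat x)=1$, the constant coefficient of $\bar a(\hat x,0)$ equals $b_i(f)\}$. Then $\mathcal{T}^d_i=\{(f,\psi):f\in\mathcal{F}^d_i,\psi\in\Psi_f\}$ and $\mathcal{T}^{d+1}=\bigcup_{i\geq1}\mathcal{T}^d_i$. *)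

From Stdlib Require Import Reals List Arith ZArith Znumtheory Bool.
Import ListNotations.
Open Scope R_scope.

(** Examples: X = N = {1,2,...}, represented by positive nats (0 is never an
    example: the adversary must pick x_t >= 1).  Labels Y = {0,1} = bool
    (false = 0, true = 1).  Features Phi = {0,1}^X = nat -> bool; the
    null symbol bot is [None] in [option feat]. *)
Definition feat := nat -> bool.

Definition is_teacher (l : nat -> bool) (psi : nat -> nat -> option feat) : Prop :=
  forall x xh : nat, (0 < x)%nat -> (0 < xh)%nat -> l x <> l xh ->
    exists phi, psi x xh = Some phi /\ phi x = true /\ phi xh = false.

Definition inXb (i x : nat) : bool := (2 ^ i <=? x)%nat && (x <? 2 ^ (i + 1))%nat.

Definition inF (i : nat) (f : nat -> bool) : Prop :=
  f 1%nat = true /\ forall x, inXb i x = false -> x <> 1%nat -> f x = false.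

Definition Pprime (d p : nat) (c : nat -> nat) (z : nat) : nat :=
  ((c 0%nat + fold_right (fun j acc => c j * z ^ j + acc) 0 (List.seq 1 (d - 1))) mod p)%nat.

Definition Pfun (i d p : nat) (c : nat -> nat) (x : nat) : nat :=
  (2 ^ (i + 1) + Pprime d p c (x - 2 ^ i + 1))%nat.

Definition indicator (l : list nat) : feat := fun z => existsb (Nat.eqb z) l.

(** psi^f_a ; a : X_i x {0,1} -> F_p^d is represented as
    a xh y j = j-th coefficient (j < d). *)
Definition psiFA (i d : nat) (p : nat -> nat) (f : nat -> bool)
    (a : nat -> bool -> nat -> nat) : nat -> nat -> option feat :=
  fun x xh =>
    if inXb i x && inXb i xh
    then Some (indicator [x; Pfun i d (p i) (a xh (f x)) x])
    else Some (indicator [x]).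

(** Membership in T^{d+1} = U_{i>=1} T^d_i (for fixed primes p_i and
    injections b_i). *)
Definition inT (d : nat) (p : nat -> nat) (b : nat -> feat -> nat)
    (l : nat -> bool) (psi : nat -> nat -> option feat) : Prop :=
  is_teacher l psi /\
  exists i : nat, (1 <= i)%nat /\ inF i l /\
    exists a : nat -> bool -> nat -> nat,
      (forall xh y j, inXb i xh = true -> (j < d)%nat -> (a xh y j < p i)%nat) /\
      (forall xh, inXb i xh = true -> l xh = true -> a xh false 0%nat = b i l) /\
      psi = psiFA i d p l a.

Definition consistentH (H : list (nat * bool)) (l : nat -> bool) : Prop :=
  forall xy, In xy H -> l (fst xy) = snd xy.

Definition Hbullet : list (nat * bool) := [(2%nat, false); (1%nat, true)].

(** One round of the interaction: (x_t, y_t, xhat_t, yhat_t, phi_t) *)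
Record entry := mkEntry {
  ex : nat; ey : bool; exh : nat; eyh : bool; ephi : option feat }.

(** A (randomized) DFF algorithm: a behavioural strategy mapping the past
    interaction S_{t-1} and x_t to a finitely supported distribution
    (list of (output, weight)) on outputs (xhat_t, yhat_t). *)
Definition alg_t := list entry -> nat -> list ((nat * bool) * R).

Definition wsum (l : list ((nat * bool) * R)) : R :=
  fold_right (fun ow acc => snd ow + acc) 0 l.

Definition alg_ok (H : list (nat * bool)) (A : alg_t) : Prop :=
  forall S x,
    Forall (fun ow => 0 <= snd ow) (A S x) /\ wsum (A S x) = 1 /\
    Forall (fun ow => In (fst ow) (H ++ map (fun e => (ex e, ey e)) S)) (A S x).

Definition adv_t := list entry -> nat * bool * (nat -> nat -> option feat).

Definition adv_ok (V : adv_t) : Prop := forall S, (0 < fst (fst (V S)))%nat.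

Definition round_entry (x : nat) (y : bool) (psi : nat -> nat -> option feat)
    (o : nat * bool) : entry :=
  mkEntry x y (fst o) (snd o) (if Bool.eqb (snd o) y then None else psi x (fst o)).

Fixpoint emist (A : alg_t) (V : adv_t) (S : list entry) (n : nat) : R :=
  match n with
  | O => 0
  | Datatypes.S n' =>
    let '(x, y, psi) := V S in
    fold_right (fun ow acc =>
      snd ow * ((if Bool.eqb (snd (fst ow)) y then 0 else 1)
                + emist A V (S ++ [round_entry x y psi (fst ow)]) n') + acc)
      0 (A S x)
  end.

Fixpoint almost_surely (A : alg_t) (V : adv_t) (P : list entry -> Prop)
    (S : list entry) (n : nat) : Prop :=
  match n with
  | O => P S
  | Datatypes.S n' =>
    let '(x, y, psi) := V S in
    forall ow, In ow (A S x) -> 0 < snd ow ->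
      almost_surely A V P (S ++ [round_entry x y psi (fst ow)]) n'
  end.

Definition dflt_entry : entry := mkEntry 0 false 0 false None.

Definition kcons (k : nat) (S : list entry) (l : nat -> bool)
    (psi : nat -> nat -> option feat) : Prop :=
  exists E : list nat, (length E <= k)%nat /\
    forall t, (t < length S)%nat -> ~ In t E ->
      let e := nth t S dflt_entry in
      l (ex e) = ey e /\ (eyh e <> ey e -> psi (ex e) (exh e) = ephi e).

Definition valid_adv (k d L : nat) (p : nat -> nat) (b : nat -> feat -> nat)
    (H : list (nat * bool)) (A : alg_t) (V : adv_t) : Prop :=
  adv_ok V /\
  almost_surely A V (fun S => exists l psi,
      inT d p b l psi /\ consistentH H l /\ kcons k S l psi) [] L.

(* The adversary shows fresh examples [2^i + t] of a single block [X_i] and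
   labels each one against the algorithm's more likely prediction, so every
   round costs at least 1/2 in expectation.  Until it commits, it reveals the
   features given by the zero polynomial, [I[x, 2^(i+1)]].  Such answers stay
   consistent with a single teacher of [T^d_i]: for a positive explanation
   [xh] used by fewer than [d] false positives [x], the polynomial of degree
   [< d] attached to [xh] can vanish at all these [x] while keeping the
   constant coefficient [b_i(f)] imposed by the class, and an explanation used
   [d] times or more is relabelled negative, which costs one of the [k]
   tolerated errors.  With at most [D = (k+1)d - 1] false positives there are
   at most [k] such explanations, so the adversary can afford [D] of them
   before committing to the teacher.  A recursion on (rounds left, budget
   left) shows that [L >= 4(D+1)] rounds then force [D] mistakes in
   expectation. *)

From Stdlib Require Import Reals List Arith ZArith Znumtheory.
From Stdlib Require Import Lra Lia ClassicalEpsilon Bool FinFun.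
Import ListNotations.
Open Scope R_scope.

(** * The mistake recursion *)

(* Lower bound on the expected number of mistakes with [n] rounds left while [m]
   more dangerous mistakes can be afforded: the adversary forces a mistake with
   probability at least 1/2 in every round, and a round that spends budget
   is one where the algorithm errs with probability more than 1/2. *)
Fixpoint mistake_value (n m : nat) : R :=
  match n, m with
  | O, _ => 0
  | Datatypes.S n', O => 1/2
  | Datatypes.S n', Datatypes.S m' =>
      (mistake_value n' (Datatypes.S m') + 1 + mistake_value n' m') / 2
  end.

Lemma mistake_value_step n m :
  0 <= mistake_value n m /\
  mistake_value n m <= mistake_value n (Datatypes.S m) <= mistake_value n m + 1.
Proof.
  revert m; induction n as [|n IH]; intros m; [simpl; lra|].
  destruct m as [|m]; simpl.
  - destruct (IH 0%nat) as [H0 [H1 H2]]; destruct n; simpl in *; lra.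
  - destruct (IH m) as [A0 [A1 A2]], (IH (Datatypes.S m)) as [B0 [B1 B2]]; lra.
Qed.

Lemma mistake_value_le_mono n m m' :
  (m <= m')%nat -> mistake_value n m <= mistake_value n m'.
Proof.
  induction 1 as [|m' _ IH]; [lra|].
  pose proof (mistake_value_step n m'); lra.
Qed.

Lemma pow2_ge_INR m : INR m + 1/2 <= 2 ^ m.
Proof.
  induction m as [|m IH]; [simpl; lra|].
  rewrite S_INR; simpl. pose proof (pow_R1_Rle 2 m). lra.
Qed.

Lemma mistake_value_ge_closed n m :
  INR m + 1/2 - 2 ^ m * (3/4) ^ n <= mistake_value n m.
Proof.
  revert m; induction n as [|n IH]; intros m.
  - simpl. pose proof (pow2_ge_INR m). lra.
  - destruct m as [|m].
    + simpl. pose proof (pow_le (3/4) n). lra.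
    + pose proof (IH m). pose proof (IH (Datatypes.S m)).
      rewrite S_INR in *. simpl in *. nra.
Qed.

(* After [4 (m + 1)] rounds the error term [2^m (3/4)^n] is at most [(81/128)^m * 81/256]. *)
Lemma mistake_value_ge m n : (4 * (m + 1) <= n)%nat -> INR m <= mistake_value n m.
Proof.
  intros Hn. pose proof (mistake_value_ge_closed n m) as Hclosed.
  destruct (Nat.le_exists_sub _ _ Hn) as [r [-> _]].
  rewrite pow_add, pow_mult, pow_add in Hclosed.
  assert (Hr : (3/4) ^ r <= 1).
  { rewrite <- (pow1 r). apply pow_incr; lra. }
  assert (Hm : 2 ^ m * ((3/4) ^ 4) ^ m <= 1).
  { rewrite <- Rpow_mult_distr, <- (pow1 m). apply pow_incr; simpl; lra. }
  pose proof (pow_le ((3/4) ^ 4) m). pose proof (pow_le 2 m).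
  pose proof (pow_le (3/4) r).
  simpl in *. nra.
Qed.

Lemma mistake_value_succ_le n m : mistake_value (Datatypes.S n) m <= mistake_value n m + 1/2.
Proof.
  destruct m as [|m]; simpl.
  - pose proof (mistake_value_step n 0). lra.
  - pose proof (mistake_value_step n m). lra.
Qed.

(** * Integer polynomials with prescribed roots *)

Section IntegerArithmetic.
Local Open Scope Z_scope.

Fixpoint zsum (f : nat -> Z) (n : nat) : Z :=
  match n with O => 0 | Datatypes.S n' => zsum f n' + f n' end.

Lemma zsum_succ_l f n : zsum f (Datatypes.S n) = f O + zsum (fun j => f (Datatypes.S j)) n.
Proof. induction n; simpl in *; lia. Qed.

Lemma zsum_ext f g n : (forall j, (j < n)%nat -> f j = g j) -> zsum f n = zsum g n.
Proof.
  induction n as [|n IH]; intros H; simpl; auto.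
  rewrite IH, H by (intros; try apply H; lia). reflexivity.
Qed.

Lemma zsum_add f g n : zsum (fun j => f j + g j) n = zsum f n + zsum g n.
Proof. induction n; simpl; lia. Qed.

Lemma zsum_scale c f n : zsum (fun j => c * f j) n = c * zsum f n.
Proof. induction n; simpl; [ring|]. rewrite IHn. ring. Qed.

Lemma zsum_opp f n : zsum (fun j => - f j) n = - zsum f n.
Proof. induction n; simpl; lia. Qed.

Lemma zsum_mod_l (f g : nat -> Z) P n :
  zsum (fun j => (f j mod P) * g j) n mod P = zsum (fun j => f j * g j) n mod P.
Proof.
  induction n as [|n IH]; simpl; auto.
  rewrite Zplus_mod, IH, Zmult_mod_idemp_l, <- Zplus_mod. reflexivity.
Qed.

(* [root_poly l j] is the coefficient of [X^j] in the product of the [w - X], [w] in [l]. *)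
Fixpoint root_poly (l : list Z) (j : nat) : Z :=
  match l with
  | [] => if Nat.eqb j 0 then 1 else 0
  | w :: l' => w * root_poly l' j - match j with O => 0 | Datatypes.S j' => root_poly l' j' end
  end.

Definition prod_roots (l : list Z) (z : Z) : Z := fold_right (fun w acc => (w - z) * acc) 1 l.

Lemma root_poly_0 l : root_poly l 0 = fold_right Z.mul 1 l.
Proof. induction l; simpl; auto. rewrite IHl. ring. Qed.

Lemma root_poly_eval l z n : (length l < n)%nat ->
  zsum (fun j => root_poly l j * z ^ Z.of_nat j) n = prod_roots l z.
Proof.
  revert n; induction l as [|w l IH]; intros n Hn; simpl in *.
  - destruct n as [|n]; [lia|]. rewrite zsum_succ_l. simpl.
    rewrite (zsum_ext _ (fun _ => 0 * 0)) by reflexivity. rewrite zsum_scale. reflexivity.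
  - destruct n as [|n]; [lia|].
    rewrite (zsum_ext _ (fun j => w * (root_poly l j * z ^ Z.of_nat j) +
          - (match j with O => 0 | Datatypes.S j' => root_poly l j' end * z ^ Z.of_nat j)))
      by (intros; ring).
    rewrite zsum_add, zsum_scale, zsum_opp, IH by lia.
    rewrite (zsum_succ_l (fun j => _)). simpl.
    rewrite (zsum_ext _ (fun j => z * (root_poly l j * z ^ Z.of_nat j))).
    2:{ intros j _.
        change (Z.pow_pos z (Pos.of_succ_nat j)) with (z ^ Z.of_nat (Datatypes.S j)).
        rewrite Nat2Z.inj_succ, Z.pow_succ_r by lia. ring. }
    rewrite zsum_scale, IH by lia. unfold prod_roots. simpl. ring.
Qed.

Lemma prod_roots_root l z : In z l -> prod_roots l z = 0.
Proof.
  induction l as [|w l IH]; intros H; [destruct H|].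
  unfold prod_roots in *; simpl.
  destruct H as [<-|H]; [ring|]. rewrite (IH H). ring.
Qed.

Lemma Pprime_zsum d p c z : (1 <= d)%nat ->
  Z.of_nat (Pprime d p c z) =
  zsum (fun j => Z.of_nat (c j) * Z.of_nat z ^ Z.of_nat j) d mod Z.of_nat p.
Proof.
  intros Hd. unfold Pprime. rewrite Nat2Z.inj_mod. f_equal.
  assert (Hseq : forall n s,
    Z.of_nat (fold_right (fun j acc => (c j * z ^ j + acc)%nat) 0%nat (seq s n)) +
      zsum (fun j => Z.of_nat (c j) * Z.of_nat z ^ Z.of_nat j) s =
    zsum (fun j => Z.of_nat (c j) * Z.of_nat z ^ Z.of_nat j) (s + n)).
  { induction n as [|n IH]; intros s; simpl.
    - rewrite Nat.add_0_r. lia.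
    - rewrite Nat2Z.inj_add, Nat2Z.inj_mul, Nat2Z.inj_pow, <- Nat.add_succ_comm, <- IH.
      simpl. lia. }
  specialize (Hseq (d - 1)%nat 1%nat). replace (1 + (d - 1))%nat with d in Hseq by lia.
  simpl in Hseq. rewrite Nat2Z.inj_add. lia.
Qed.

Lemma Pprime_root_poly d p l K z : (0 < p)%nat -> (length l < d)%nat ->
  Z.of_nat (Pprime d p (fun j => Z.to_nat ((K * root_poly l j) mod Z.of_nat p)) z) =
  (K * prod_roots l (Z.of_nat z)) mod Z.of_nat p.
Proof.
  intros Hp Hd. rewrite Pprime_zsum by lia.
  rewrite (zsum_ext _ (fun j => ((K * root_poly l j) mod Z.of_nat p) * Z.of_nat z ^ Z.of_nat j)).
  2:{ intros j _. rewrite Z2Nat.id; [reflexivity|]. apply Z.mod_pos_bound. lia. }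
  rewrite zsum_mod_l.
  rewrite (zsum_ext _ (fun j => K * (root_poly l j * Z.of_nat z ^ Z.of_nat j))) by (intros; ring).
  rewrite zsum_scale, root_poly_eval by exact Hd. reflexivity.
Qed.

Lemma rel_prime_prod P l : prime P -> (forall w, In w l -> 0 < w < P) ->
  rel_prime (fold_right Z.mul 1 l) P.
Proof.
  intros HP; induction l as [|w l IH]; intros Hl; simpl.
  - apply rel_prime_1.
  - apply rel_prime_sym, rel_prime_mult; apply rel_prime_sym.
    + apply rel_prime_le_prime; [exact HP|]. specialize (Hl w (or_introl eq_refl)). lia.
    + apply IH. intros; apply Hl; right; assumption.
Qed.

Definition inv_mod (P a : Z) : Z := epsilon (inhabits 0) (fun u => (u * a) mod P = 1).

Lemma inv_mod_spec P a : prime P -> rel_prime a P -> (inv_mod P a * a) mod P = 1.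
Proof.
  intros HP Ha. unfold inv_mod. apply epsilon_spec.
  destruct (rel_prime_bezout _ _ Ha) as [u v Huv].
  exists u. replace (u * a) with (1 + (- v) * P) by lia.
  rewrite Z_mod_plus_full. apply Z.mod_1_l. pose proof (prime_ge_2 _ HP). lia.
Qed.

End IntegerArithmetic.

(** * Expected mistakes and almost sure properties *)

Definition expect (f : (nat * bool) * R -> R) (l : list ((nat * bool) * R)) : R :=
  fold_right (fun ow acc => snd ow * f ow + acc) 0 l.

Definition prob_true (l : list ((nat * bool) * R)) : R :=
  expect (fun ow => if snd (fst ow) then 1 else 0) l.

Lemma expect_le f g l : Forall (fun ow => 0 <= snd ow) l ->
  (forall ow, In ow l -> g ow <= f ow) -> expect g l <= expect f l.
Proof.
  induction 1 as [|ow l Hw Hl IH]; intros H; simpl; [lra|].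
  pose proof (H ow (or_introl eq_refl)).
  assert (expect g l <= expect f l) by (apply IH; intros; apply H; right; assumption).
  nra.
Qed.

Lemma expect_if c1 c0 l :
  expect (fun ow => if snd (fst ow) then c1 else c0) l =
  c1 * prob_true l + c0 * (wsum l - prob_true l).
Proof.
  unfold prob_true; induction l as [|ow l IH]; simpl; [lra|].
  rewrite IH. destruct (snd (fst ow)); lra.
Qed.

Lemma expect_const c l : expect (fun _ => c) l = c * wsum l.
Proof. induction l; simpl; [lra|]. rewrite IHl. lra. Qed.

Lemma emist_succ_ge A V S n x y psi g :
  V S = (x, y, psi) -> Forall (fun ow => 0 <= snd ow) (A S x) ->
  (forall ow, In ow (A S x) ->
     g ow <= (if Bool.eqb (snd (fst ow)) y then 0 else 1) +
             emist A V (S ++ [round_entry x y psi (fst ow)]) n) ->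
  expect g (A S x) <= emist A V S (Datatypes.S n).
Proof.
  intros HV Hnn Hg. simpl. rewrite HV.
  exact (expect_le _ g _ Hnn Hg).
Qed.

Lemma emist_nonneg H A V S n : alg_ok H A -> 0 <= emist A V S n.
Proof.
  intros HA. revert S; induction n as [|n IH]; intros S; [simpl; lra|].
  destruct (V S) as [[x y] psi] eqn:HV.
  destruct (HA S x) as [Hnn [Hsum _]].
  apply Rle_trans with (expect (fun _ => 0) (A S x)); [rewrite expect_const; lra|].
  apply (emist_succ_ge _ _ _ _ _ _ _ _ HV Hnn). intros ow _.
  pose proof (IH (S ++ [round_entry x y psi (fst ow)])). destruct (Bool.eqb _ _); lra.
Qed.

Lemma almost_surely_invariant A V (P Inv : list entry -> Prop) :
  (forall S x y psi o, V S = (x, y, psi) -> Inv S -> Inv (S ++ [round_entry x y psi o])) ->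
  forall n S, Inv S -> (forall S', Inv S' -> length S' = (length S + n)%nat -> P S') ->
  almost_surely A V P S n.
Proof.
  intros Hstep n; induction n as [|n IH]; intros S HS HP; simpl.
  - apply HP; [exact HS | lia].
  - destruct (V S) as [[x y] psi] eqn:HV. intros ow _ _.
    apply IH; [exact (Hstep _ _ _ _ _ HV HS)|].
    intros S' HS' Hlen. apply HP; [exact HS'|]. rewrite Hlen, length_app. simpl. lia.
Qed.

Lemma list_sum_map_ge {A : Type} (c : nat) (f : A -> nat) (l : list A) :
  (forall t, In t l -> c <= f t)%nat -> (c * length l <= list_sum (map f l))%nat.
Proof.
  induction l as [|t l IH]; intros H; simpl; [lia|].
  pose proof (H t (or_introl eq_refl)). pose proof (IH (fun u Hu => H u (or_intror Hu))). lia.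
Qed.

Lemma sum_fiber_lengths_le {A : Type} (f : A -> nat) (xs : list nat) (l : list A) :
  NoDup xs ->
  (list_sum (map (fun x => length (filter (fun e => Nat.eqb (f e) x) l)) xs) <= length l)%nat.
Proof.
  intros Hxs. revert l; induction Hxs as [|x xs Hx Hxs IH]; intros l; simpl; [lia|].
  rewrite <- (filter_length (fun e => Nat.eqb (f e) x) l).
  apply Nat.add_le_mono_l.
  erewrite map_ext_in; [apply IH|].
  intros x' Hx'. simpl. f_equal. clear IH.
  induction l as [|e l IHl]; simpl; [reflexivity|].
  destruct (Nat.eqb_spec (f e) x) as [->|]; simpl.
  - destruct (Nat.eqb_spec x x'); [subst; contradiction|exact IHl].
  - destruct (Nat.eqb (f e) x'); simpl; congruence.
Qed.

(** * The teacher class *)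

Lemma inXb_iff i x : inXb i x = true <-> (2 ^ i <= x < 2 * 2 ^ i)%nat.
Proof.
  unfold inXb. rewrite andb_true_iff, Nat.leb_le, Nat.ltb_lt, Nat.add_1_r, Nat.pow_succ_r'.
  tauto.
Qed.

Lemma four_le_pow2 i : (2 <= i)%nat -> (4 <= 2 ^ i)%nat.
Proof. intros Hi. exact (Nat.pow_le_mono_r 2 2 i ltac:(lia) Hi). Qed.

Lemma inXb_small i x : (2 <= i)%nat -> (x < 4)%nat -> inXb i x = false.
Proof.
  intros Hi Hx. destruct (inXb i x) eqn:E; [|reflexivity].
  apply inXb_iff in E. pose proof (four_le_pow2 i Hi). lia.
Qed.

Lemma Pprime_zero d p z : (0 < p)%nat -> Pprime d p (fun _ => 0%nat) z = 0%nat.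
Proof.
  intros Hp. unfold Pprime.
  replace (fold_right _ _ _) with 0%nat by (induction (seq 1 (d - 1)); simpl; auto).
  apply Nat.Div0.mod_0_l.
Qed.

Lemma psiFA_is_teacher i d p f a : (1 <= i)%nat -> is_teacher f (psiFA i d p f a).
Proof.
  intros Hi x xh _ _ Hne.
  assert (Hx : x <> xh) by (intros ->; auto).
  unfold psiFA, indicator.
  destruct (inXb i x && inXb i xh) eqn:E; eexists; (split; [reflexivity|]); simpl;
    rewrite Nat.eqb_refl; (split; [reflexivity|]); destruct (Nat.eqb_spec xh x); try lia.
  apply andb_true_iff in E as [_ E]. apply inXb_iff in E.
  unfold Pfun. rewrite Nat.add_1_r, Nat.pow_succ_r', orb_false_r.
  apply Nat.eqb_neq. lia.
Qed.

(** * The adversary *)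

Section Adversary.
Variables (i d D : nat) (p : nat -> nat) (b : nat -> feat -> nat).

(* The false positives explained by a point of [X_i]: the only mistakes whose
   feature constrains the polynomials of the final teacher. *)
Definition dangerous (e : entry) : bool :=
  eyh e && negb (ey e) && inXb i (ex e) && inXb i (exh e).

Definition n_dangerous (S : list entry) : nat := length (filter dangerous S).

Definition explained_by (S : list entry) (xh : nat) : list entry :=
  filter (fun e => Nat.eqb (exh e) xh) (filter dangerous S).

Definition sacrificed (S : list entry) (xh : nat) : bool :=
  Nat.leb d (length (explained_by S xh)).

(* Round [t] of the prefix [S] shows the fresh example [2^i + t]; the final
   teacher follows the given labels, except that sacrificed explanations become
   negative. *)
Definition final_label (S : list entry) (x : nat) : bool :=
  Nat.eqb x 1 ||
  (inXb i x && Nat.ltb (x - 2 ^ i) (length S) && ey (nth (x - 2 ^ i) S dflt_entry)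
   && negb (sacrificed S x)).

Definition root_set (S : list entry) (xh : nat) : list Z :=
  map (fun e => Z.of_nat (ex e - 2 ^ i + 1)) (explained_by S xh).

(* For a positive explanation [xh], the polynomial used on negative examples is
   [b(f) * prod (w - X) / prod w], which has constant coefficient [b(f)] and
   vanishes at every point [x - 2^i + 1] of a false positive explained by [xh];
   there are fewer than [d] of them since [xh] is not sacrificed. *)
Definition final_coef (S : list entry) (xh : nat) (y : bool) (j : nat) : nat :=
  if y then 0%nat
  else if final_label S xh then
    let P := Z.of_nat (p i) in
    let roots := root_set S xh in
    Z.to_nat ((Z.of_nat (b i (final_label S)) * inv_mod P (fold_right Z.mul 1%Z roots)
               * root_poly roots j) mod P)
  else 0%nat.

Definition final_psi (S : list entry) : nat -> nat -> option feat :=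
  psiFA i d p (final_label S) (final_coef S).

Definition null_psi : nat -> nat -> option feat :=
  psiFA i d p (fun _ => false) (fun _ _ _ => 0%nat).

(* [phase S = (Sp, committed)]: [Sp] is the part of [S] played before the
   adversary answered with [final_psi]. *)
Definition phase_step (st : list entry * bool) (e : entry) : list entry * bool :=
  let (Sp, committed) := st in
  if committed then (Sp, true)
  else if Nat.eqb (n_dangerous Sp) D && negb (ey e) then (Sp, true)
  else (Sp ++ [e], false).

Definition phase (S : list entry) : list entry * bool := fold_left phase_step S ([], false).

(* [null_psi] agrees with the final teacher as long as at most [D] dangerous
   mistakes were made; when that budget is spent the adversary answers with the
   final teacher's feature once and then repeats [(2, 0)]. *)
Definition adversary (A : alg_t) : adv_t := fun S =>
  let (Sp, committed) := phase S in
  if committed then (2%nat, false, null_psi)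
  else
    let x := (2 ^ i + length S)%nat in
    if Rle_dec (prob_true (A S x)) (1/2) then (x, true, null_psi)
    else if Nat.ltb (n_dangerous Sp) D then (x, false, null_psi)
    else (x, false, final_psi Sp).

Lemma phase_snoc S e : phase (S ++ [e]) = phase_step (phase S) e.
Proof. unfold phase. rewrite fold_left_app. reflexivity. Qed.

Lemma n_dangerous_snoc Sp e :
  n_dangerous (Sp ++ [e]) = (n_dangerous Sp + if dangerous e then 1 else 0)%nat.
Proof.
  unfold n_dangerous. rewrite filter_app, length_app. simpl.
  destruct (dangerous e); reflexivity.
Qed.

Lemma adversary_positive A S : (0 < fst (fst (adversary A S)))%nat.
Proof.
  assert (0 < 2 ^ i)%nat by (apply Nat.neq_0_lt_0, Nat.pow_nonzero; lia).
  unfold adversary. destruct (phase S) as [Sp []]; simpl; [lia|].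
  destruct (Rle_dec _ _); [|destruct (Nat.ltb _ _)]; simpl; lia.
Qed.

Section Value.
Variable A : alg_t.
Hypothesis HA : alg_ok Hbullet A.

Definition emist_ge_value (n : nat) : Prop :=
  forall S Sp, phase S = (Sp, false) -> (n_dangerous Sp <= D)%nat ->
    mistake_value n (D - n_dangerous Sp) <= emist A (adversary A) S n.

Section Round.
Variables (n : nat) (S Sp : list entry).
Hypothesis Hph : phase S = (Sp, false).
Hypothesis HSp : (n_dangerous Sp <= D)%nat.
Let x := (2 ^ i + length S)%nat.

Lemma emist_ge_commit : 1/2 < prob_true (A S x) -> (D <= n_dangerous Sp)%nat ->
  mistake_value (Datatypes.S n) (D - n_dangerous Sp) <= emist A (adversary A) S (Datatypes.S n).
Proof.
  intros Hq Hge. destruct (HA S x) as [Hnn [Hsum _]].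
  assert (HV : adversary A S = (x, false, final_psi Sp)).
  { unfold adversary. rewrite Hph. fold x.
    destruct (Rle_dec _ _); [lra|]. apply Nat.ltb_ge in Hge. rewrite Hge. reflexivity. }
  rewrite (proj2 (Nat.sub_0_le D _) Hge).
  apply Rle_trans with (expect (fun ow => if snd (fst ow) then 1 else 0) (A S x)).
  { rewrite expect_if, Hsum. simpl. destruct n; lra. }
  apply (emist_succ_ge _ _ _ _ _ _ _ _ HV Hnn). intros ow _.
  pose proof (emist_nonneg _ _ (adversary A)
                (S ++ [round_entry x false (final_psi Sp) (fst ow)]) n HA).
  destruct (snd (fst ow)); simpl; lra.
Qed.

Hypothesis IH : emist_ge_value n.

Lemma emist_ge_label_true : prob_true (A S x) <= 1/2 ->
  mistake_value (Datatypes.S n) (D - n_dangerous Sp) <= emist A (adversary A) S (Datatypes.S n).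
Proof.
  intros Hq. destruct (HA S x) as [Hnn [Hsum _]].
  assert (HV : adversary A S = (x, true, null_psi)).
  { unfold adversary. rewrite Hph. fold x. destruct (Rle_dec _ _); [reflexivity|contradiction]. }
  set (m := (D - n_dangerous Sp)%nat).
  apply Rle_trans with
    (expect (fun ow => if snd (fst ow) then mistake_value n m else 1 + mistake_value n m) (A S x)).
  { rewrite expect_if, Hsum. pose proof (mistake_value_succ_le n m). lra. }
  apply (emist_succ_ge _ _ _ _ _ _ _ _ HV Hnn). intros ow _.
  set (e := round_entry x true null_psi (fst ow)).
  assert (Hd : dangerous e = false).
  { unfold e, dangerous, round_entry. simpl. rewrite !andb_false_r. reflexivity. }
  assert (Hph' : phase (S ++ [e]) = (Sp ++ [e], false)).
  { rewrite phase_snoc, Hph. simpl. rewrite andb_false_r. reflexivity. }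
  pose proof (IH _ _ Hph') as Hn. rewrite n_dangerous_snoc, Hd, Nat.add_0_r in Hn.
  specialize (Hn HSp). destruct (snd (fst ow)); simpl; fold m in Hn; lra.
Qed.

Lemma emist_ge_label_false : 1/2 < prob_true (A S x) -> (n_dangerous Sp < D)%nat ->
  mistake_value (Datatypes.S n) (D - n_dangerous Sp) <= emist A (adversary A) S (Datatypes.S n).
Proof.
  intros Hq Hlt. destruct (HA S x) as [Hnn [Hsum _]].
  assert (HV : adversary A S = (x, false, null_psi)).
  { unfold adversary. rewrite Hph. fold x.
    destruct (Rle_dec _ _); [lra|]. apply Nat.ltb_lt in Hlt. rewrite Hlt. reflexivity. }
  destruct (D - n_dangerous Sp)%nat as [|m] eqn:Em; [lia|].
  apply Rle_trans with (expect (fun ow =>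
      if snd (fst ow) then 1 + mistake_value n m else mistake_value n (Datatypes.S m)) (A S x)).
  { rewrite expect_if, Hsum. simpl. pose proof (mistake_value_step n m). nra. }
  apply (emist_succ_ge _ _ _ _ _ _ _ _ HV Hnn). intros ow _.
  set (e := round_entry x false null_psi (fst ow)).
  assert (Hph' : phase (S ++ [e]) = (Sp ++ [e], false)).
  { rewrite phase_snoc, Hph. simpl.
    replace (Nat.eqb (n_dangerous Sp) D) with false by (symmetry; apply Nat.eqb_neq; lia).
    reflexivity. }
  pose proof (IH _ _ Hph') as Hn. rewrite n_dangerous_snoc in Hn.
  destruct (snd (fst ow)) eqn:Hy; simpl; fold e.
  - assert (Hc : ((if dangerous e then 1 else 0) <= 1)%nat) by (destruct (dangerous e); lia).
    assert (mistake_value n m <=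
            mistake_value n (D - (n_dangerous Sp + if dangerous e then 1 else 0)))
      by (apply mistake_value_le_mono; lia).
    specialize (Hn ltac:(lia)). lra.
  - assert (Hd : dangerous e = false).
    { unfold e, dangerous, round_entry. simpl. rewrite Hy. reflexivity. }
    rewrite Hd, Nat.add_0_r, Em in Hn. specialize (Hn HSp). lra.
Qed.

End Round.

Lemma emist_adversary_ge n : emist_ge_value n.
Proof.
  induction n as [|n IH]; intros S Sp Hph HSp; [simpl; lra|].
  destruct (Rle_dec (prob_true (A S (2 ^ i + length S)%nat)) (1/2)) as [Hq|Hq].
  - apply emist_ge_label_true; assumption.
  - apply Rnot_le_lt in Hq. destruct (Nat.lt_ge_cases (n_dangerous Sp) D).
    + apply emist_ge_label_false; assumption.
    + apply emist_ge_commit; assumption.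
Qed.

End Value.
End Adversary.

Definition agrees_on (psi : nat -> nat -> option feat) (e : entry) : Prop :=
  eyh e <> ey e -> psi (ex e) (exh e) = ephi e.

Lemma agrees_on_round x y psi o : agrees_on psi (round_entry x y psi o).
Proof.
  destruct o as [xh yh]. unfold agrees_on, round_entry; simpl.
  destruct yh, y; simpl; congruence.
Qed.

Section Invariant.
Variables (i d D : nat) (p : nat -> nat) (b : nat -> feat -> nat) (A : alg_t).

Definition prefix_ok (Sp : list entry) : Prop :=
  (forall t, (t < length Sp)%nat -> ex (nth t Sp dflt_entry) = (2 ^ i + t)%nat) /\
  Forall (agrees_on (null_psi i d p)) Sp /\ (n_dangerous i Sp <= D)%nat.

Definition committed_tail (Sp : list entry) (S : list entry) : Prop :=
  exists ec post, S = Sp ++ ec :: post /\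
    ex ec = (2 ^ i + length Sp)%nat /\ ey ec = false /\ agrees_on (final_psi i d p b Sp) ec /\
    Forall (fun e => ex e = 2%nat /\ ey e = false /\ agrees_on (null_psi i d p) e) post.

Definition adversary_invariant (S : list entry) : Prop :=
  let (Sp, committed) := phase i D S in
  prefix_ok Sp /\ (if committed then committed_tail Sp S else S = Sp).

Lemma prefix_ok_snoc Sp e :
  prefix_ok Sp -> ex e = (2 ^ i + length Sp)%nat -> agrees_on (null_psi i d p) e ->
  (n_dangerous i (Sp ++ [e]) <= D)%nat -> prefix_ok (Sp ++ [e]).
Proof.
  intros [Hex [Hagree _]] He Hnull HD. split; [|split; [|exact HD]].
  - intros t Ht. rewrite length_app in Ht; simpl in Ht.
    destruct (Nat.lt_ge_cases t (length Sp)).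
    + rewrite app_nth1 by assumption. auto.
    + replace t with (length Sp) by lia. rewrite nth_middle. exact He.
  - apply Forall_app. auto.
Qed.

Lemma adversary_invariant_nil : adversary_invariant [].
Proof.
  unfold adversary_invariant, prefix_ok, n_dangerous. simpl.
  repeat split; auto with arith. intros t Ht. inversion Ht.
Qed.

Lemma adversary_invariant_snoc S x y psi o :
  adversary i d D p b A S = (x, y, psi) -> adversary_invariant S ->
  adversary_invariant (S ++ [round_entry x y psi o]).
Proof.
  unfold adversary_invariant, adversary. rewrite phase_snoc.
  destruct (phase i D S) as [Sp []]; intros HV [Hpre Htail].
  - injection HV as <- <- <-. split; [exact Hpre|].
    destruct Htail as [ec [post [-> [H1 [H2 [H3 H4]]]]]].
    exists ec, (post ++ [round_entry 2 false (null_psi i d p) o]).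
    split; [rewrite <- app_assoc; reflexivity|].
    repeat split; auto. apply Forall_app. split; [exact H4|].
    repeat constructor. apply agrees_on_round.
  - subst S. set (x0 := (2 ^ i + length Sp)%nat) in HV.
    destruct (Rle_dec _ _).
    + injection HV as <- <- <-. simpl. rewrite andb_false_r.
      split; [|reflexivity]. apply prefix_ok_snoc; auto using agrees_on_round.
      rewrite n_dangerous_snoc. unfold dangerous, round_entry. simpl.
      rewrite !andb_false_r, Nat.add_0_r. apply Hpre.
    + destruct (Nat.ltb_spec (n_dangerous i Sp) D); injection HV as <- <- <-; simpl.
      * replace (Nat.eqb (n_dangerous i Sp) D) with false by (symmetry; apply Nat.eqb_neq; lia).
        split; [|reflexivity]. apply prefix_ok_snoc; auto using agrees_on_round.
        rewrite n_dangerous_snoc. destruct (dangerous _ _); lia.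
      * destruct Hpre as [Hex [Hnull Hcount]].
        replace (Nat.eqb (n_dangerous i Sp) D) with true by (symmetry; apply Nat.eqb_eq; lia).
        split; [repeat split; assumption|].
        exists (round_entry x0 false (final_psi i d p b Sp) o), [].
        repeat split; auto using agrees_on_round.
Qed.

End Invariant.

(** * The final teacher *)

Section FinalTeacher.
Variables (k i d D : nat) (p : nat -> nat) (b : nat -> feat -> nat).

Lemma final_label_inF Sp : inF i (final_label i d Sp).
Proof.
  split; [reflexivity|]. intros x Hx H1. unfold final_label.
  rewrite Hx. apply Nat.eqb_neq in H1 as ->. reflexivity.
Qed.

Lemma root_set_bounds Sp xh w :
  (2 <= i)%nat -> (2 ^ (2 ^ i) <= p i)%nat -> In w (root_set i Sp xh) ->
  (0 < w < Z.of_nat (p i))%Z.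
Proof.
  intros Hi Hp_large. unfold root_set, explained_by. rewrite in_map_iff. intros [e [<- He]].
  apply filter_In in He as [He _]. apply filter_In in He as [_ He]. unfold dangerous in He.
  apply andb_true_iff in He as [[_ Hx]%andb_true_iff _]. apply inXb_iff in Hx.
  pose proof (Nat.pow_gt_lin_r 2 i ltac:(lia)).
  pose proof (Nat.pow_lt_mono_r 2 i (2 ^ i) ltac:(lia) ltac:(assumption)).
  lia.
Qed.

Lemma final_coef_lt Sp xh y j : (2 <= p i)%nat -> (final_coef i d p b Sp xh y j < p i)%nat.
Proof.
  intros Hp. unfold final_coef. destruct y; [lia|].
  destruct (final_label i d Sp xh); [|lia].
  match goal with |- (Z.to_nat (?v mod ?P) < _)%nat => pose proof (Z.mod_pos_bound v P) end.
  lia.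
Qed.

Lemma final_coef_const Sp xh :
  (2 <= i)%nat -> prime (Z.of_nat (p i)) -> (2 ^ (2 ^ i) <= p i)%nat ->
  (b i (final_label i d Sp) < p i)%nat -> final_label i d Sp xh = true ->
  final_coef i d p b Sp xh false 0 = b i (final_label i d Sp).
Proof.
  intros Hi Hp_prime Hp_large Hb Hf. unfold final_coef. rewrite Hf, root_poly_0.
  set (P := Z.of_nat (p i)). set (pi := fold_right Z.mul 1%Z (root_set i Sp xh)).
  assert (Hinv : ((inv_mod P pi * pi) mod P = 1)%Z).
  { apply inv_mod_spec; [exact Hp_prime|]. apply rel_prime_prod; [exact Hp_prime|].
    intros w; apply root_set_bounds; assumption. }
  rewrite <- Z.mul_assoc, Zmult_mod, Hinv, Z.mul_1_r, Zmod_mod, Z.mod_small by lia.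
  apply Nat2Z.id.
Qed.

Lemma final_psi_agrees Sp e : (2 <= i)%nat -> (2 <= p i)%nat ->
  In e Sp -> eyh e <> ey e ->
  final_label i d Sp (ex e) = ey e ->
  final_psi i d p b Sp (ex e) (exh e) = null_psi i d p (ex e) (exh e).
Proof.
  intros Hi Hp He Hne Hf.
  unfold final_psi, null_psi, psiFA.
  destruct (inXb i (ex e) && inXb i (exh e)) eqn:Hin; [|reflexivity].
  rewrite Hf. destruct (ey e) eqn:Hy; [reflexivity|].
  assert (Hyh : eyh e = true) by (destruct (eyh e); congruence).
  unfold Pfun. rewrite Pprime_zero by lia.
  match goal with |- Some (indicator [_; (_ + ?q)%nat]) = _ =>
    enough (Hq : q = 0%nat) by (rewrite Hq; reflexivity) end.
  unfold final_coef.
  destruct (final_label i d Sp (exh e)) eqn:Hfx; [|apply Pprime_zero; lia].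
  assert (He_expl : In e (explained_by i Sp (exh e))).
  { apply filter_In. split; [|apply Nat.eqb_refl]. apply filter_In. split; [exact He|].
    unfold dangerous. rewrite Hyh, Hy. exact Hin. }
  assert (Hfew : (length (root_set i Sp (exh e)) < d)%nat).
  { unfold root_set. rewrite length_map.
    apply andb_true_iff in Hin as [_ Hxh].
    unfold final_label, sacrificed in Hfx. rewrite Hxh in Hfx.
    assert (Hxh1 : exh e <> 1%nat) by (intros E; rewrite E, inXb_small in Hxh by lia; discriminate).
    apply Nat.eqb_neq in Hxh1. rewrite Hxh1 in Hfx. simpl in Hfx.
    apply andb_true_iff in Hfx as [_ Hfx]. apply negb_true_iff, Nat.leb_gt in Hfx. exact Hfx. }
  apply Nat2Z.inj. rewrite Pprime_root_poly by lia.
  rewrite prod_roots_root, Z.mul_0_r; [reflexivity|].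
  unfold root_set. apply in_map_iff. exists e. split; [|exact He_expl].
  rewrite Nat2Z.inj_add. reflexivity.
Qed.

Definition sacrificed_rounds (Sp : list entry) : list nat :=
  filter (fun t => ey (nth t Sp dflt_entry) && sacrificed i d Sp (2 ^ i + t)) (seq 0 (length Sp)).

(* Each sacrificed explanation carries at least [d] of the fewer than
   [(k + 1) d] dangerous mistakes. *)
Lemma sacrificed_rounds_length Sp : (D < (k + 1) * d)%nat ->
  (n_dangerous i Sp <= D)%nat -> (length (sacrificed_rounds Sp) <= k)%nat.
Proof.
  intros HD HSp. set (E := sacrificed_rounds Sp).
  set (load := fun t => length (explained_by i Sp (2 ^ i + t))).
  assert (Hlow : (d * length E <= list_sum (map load E))%nat).
  { apply list_sum_map_ge. intros t Ht. apply filter_In in Ht as [_ Ht].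
    apply andb_true_iff in Ht as [_ Ht]. apply Nat.leb_le in Ht. exact Ht. }
  assert (Hup : (list_sum (map load E) <= n_dangerous i Sp)%nat).
  { unfold load.
    rewrite <- (map_map (fun t => 2 ^ i + t)%nat (fun x => length (explained_by i Sp x))).
    apply sum_fiber_lengths_le. apply Injective_map_NoDup; [intros t u; lia|].
    apply NoDup_filter, seq_NoDup. }
  destruct (Nat.le_gt_cases (length E) k) as [Hk|Hk]; [exact Hk|].
  assert (d * (k + 1) <= d * length E)%nat by (apply Nat.mul_le_mono_l; lia).
  lia.
Qed.

Lemma final_teacher_inT Sp :
  (2 <= i)%nat -> prime (Z.of_nat (p i)) -> (2 ^ (2 ^ i) <= p i)%nat ->
  (forall f, inF i f -> (b i f < p i)%nat) ->
  inT d p b (final_label i d Sp) (final_psi i d p b Sp).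
Proof.
  intros Hi Hp_prime Hp_large Hb.
  split; [apply psiFA_is_teacher; lia|].
  exists i. split; [lia|]. split; [apply final_label_inF|].
  exists (final_coef i d p b Sp). repeat split.
  - intros. apply final_coef_lt. apply prime_ge_2 in Hp_prime. lia.
  - intros xh _ Hf. apply final_coef_const; auto using final_label_inF.
Qed.

Lemma final_label_Hbullet Sp : (2 <= i)%nat -> consistentH Hbullet (final_label i d Sp).
Proof.
  intros Hi xy [<-|[<-|[]]]; unfold final_label; simpl; [|reflexivity].
  rewrite inXb_small by lia. reflexivity.
Qed.

Lemma final_teacher_on_prefix Sp t : (2 <= i)%nat -> (2 <= p i)%nat ->
  prefix_ok i d D p Sp -> (length Sp <= 2 ^ i)%nat ->
  (t < length Sp)%nat ->
  ~ In t (sacrificed_rounds Sp) ->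
  let e := nth t Sp dflt_entry in
  final_label i d Sp (ex e) = ey e /\ agrees_on (final_psi i d p b Sp) e.
Proof.
  intros Hi Hp [Hex [Hnull _]] Hlen Ht Hsac. pose proof (Hex t Ht) as Hxt. cbv zeta.
  set (e := nth t Sp dflt_entry) in *.
  assert (Hf : final_label i d Sp (ex e) = ey e).
  { unfold final_label. rewrite Hxt, Nat.add_comm, Nat.add_sub.
    pose proof (four_le_pow2 i Hi).
    assert (Hin : inXb i (t + 2 ^ i) = true) by (apply inXb_iff; lia).
    assert (H1 : Nat.eqb (t + 2 ^ i) 1 = false) by (apply Nat.eqb_neq; lia).
    rewrite Hin, H1, (proj2 (Nat.ltb_lt _ _) Ht). simpl. fold e.
    destruct (ey e) eqn:Hy; [|reflexivity].
    destruct (sacrificed i d Sp (t + 2 ^ i)) eqn:Hs; [|reflexivity].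
    exfalso. apply Hsac. apply filter_In. split; [apply in_seq; lia|].
    fold e. rewrite Hy, Nat.add_comm, Hs. reflexivity. }
  split; [exact Hf|]. intros Hne.
  assert (HeIn : In e Sp) by (apply nth_In; exact Ht).
  rewrite <- (proj1 (Forall_forall _ _) Hnull e HeIn Hne).
  apply final_psi_agrees; assumption.
Qed.

Lemma final_label_fresh Sp : (2 <= i)%nat -> final_label i d Sp (2 ^ i + length Sp) = false.
Proof.
  intros Hi. pose proof (four_le_pow2 i Hi). unfold final_label.
  rewrite Nat.add_comm, Nat.add_sub, Nat.ltb_irrefl, !andb_false_r, orb_false_r.
  apply Nat.eqb_neq. lia.
Qed.

Lemma final_teacher_at_2 Sp e : (2 <= i)%nat -> ex e = 2%nat -> ey e = false ->
  agrees_on (null_psi i d p) e -> final_label i d Sp (ex e) = ey e /\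
  agrees_on (final_psi i d p b Sp) e.
Proof.
  intros Hi Hx Hy Hnull. unfold final_label. rewrite Hx, Hy, inXb_small by lia.
  split; [reflexivity|]. intros Hne. rewrite <- (Hnull Hne), Hx.
  unfold null_psi, final_psi, psiFA. rewrite inXb_small by lia. reflexivity.
Qed.

Lemma final_teacher_consistent S :
  (2 <= i)%nat -> prime (Z.of_nat (p i)) -> (2 ^ (2 ^ i) <= p i)%nat ->
  (forall f, inF i f -> (b i f < p i)%nat) -> (D < (k + 1) * d)%nat ->
  adversary_invariant i d D p b S -> (length S <= 2 ^ i)%nat ->
  exists l psi, inT d p b l psi /\ consistentH Hbullet l /\ kcons k S l psi.
Proof.
  intros Hi Hp_prime Hp_large Hb HD.
  unfold adversary_invariant. destruct (phase i D S) as [Sp committed].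
  intros [Hpre Htail] Hlen.
  exists (final_label i d Sp), (final_psi i d p b Sp).
  assert (Hp : (2 <= p i)%nat) by (apply prime_ge_2 in Hp_prime; lia).
  split; [apply final_teacher_inT; assumption|]. split; [apply final_label_Hbullet, Hi|].
  exists (sacrificed_rounds Sp). split; [apply sacrificed_rounds_length; [exact HD | apply Hpre]|].
  intros t Ht Hsac. cbv zeta.
  destruct committed; [|subst S; apply final_teacher_on_prefix; assumption].
  destruct Htail as [ec [post [-> [Hx [Hy [Hagree Hpost]]]]]].
  rewrite length_app in Hlen, Ht. simpl in Hlen, Ht.
  destruct (Nat.lt_ge_cases t (length Sp)) as [Hlt|Hge].
  - rewrite app_nth1 by exact Hlt. apply final_teacher_on_prefix; auto; lia.
  - rewrite app_nth2 by exact Hge.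
    destruct (t - length Sp)%nat as [|u] eqn:Eu; simpl.
    + split; [rewrite Hx, final_label_fresh, Hy by exact Hi; reflexivity | exact Hagree].
    + assert (Hin : In (nth u post dflt_entry) post) by (apply nth_In; lia).
      destruct (proj1 (Forall_forall _ _) Hpost _ Hin) as [Hx2 [Hy2 Hnull]].
      exact (final_teacher_at_2 Sp _ Hi Hx2 Hy2 Hnull).
Qed.

End FinalTeacher.

Theorem mainTheorem16 :
  forall (k d L : nat), (1 <= k)%nat -> (1 <= d)%nat -> (4 * (k + 1) * d <= L)%nat ->
  forall (p : nat -> nat) (b : nat -> feat -> nat),
    (forall i, (1 <= i)%nat -> prime (Z.of_nat (p i)) /\ (2 ^ (2 ^ i) <= p i)%nat) ->
    (forall i f, (1 <= i)%nat -> inF i f -> (b i f < p i)%nat) ->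
    (forall i f g, (1 <= i)%nat -> inF i f -> inF i g -> b i f = b i g -> f = g) ->
  forall A : alg_t, alg_ok Hbullet A ->
  forall B : R,
    (forall V : adv_t, valid_adv k d L p b Hbullet A V -> emist A V [] L <= B) ->
    INR ((k + 1) * d) - 1 <= B.
Proof.
  intros k d L Hk Hd HL p b Hp Hb _ A HA B HB.
  (* [X_i] then holds [L] fresh examples and avoids [1] and [2]. *)
  set (i := (L + 2)%nat). set (D := ((k + 1) * d - 1)%nat).
  assert (Hi : (2 <= i)%nat) by lia.
  assert (HD : (D + 1 = (k + 1) * d)%nat) by (unfold D; nia).
  assert (HLi : (L <= 2 ^ i)%nat) by (pose proof (Nat.pow_gt_lin_r 2 i ltac:(lia)); lia).
  destruct (Hp i ltac:(lia)) as [Hprime Hlarge].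
  assert (Hvalid : valid_adv k d L p b Hbullet A (adversary i d D p b A)).
  { split; [intros S; apply adversary_positive|].
    apply (almost_surely_invariant _ _ _ (adversary_invariant i d D p b)).
    - intros. eapply adversary_invariant_snoc; eassumption.
    - exact (adversary_invariant_nil i d D p b).
    - intros S HS Hlen. simpl in Hlen.
      apply (final_teacher_consistent k i d D p b); auto; try lia.
      intros f Hf. apply Hb; [lia|exact Hf]. }
  pose proof (emist_adversary_ge i d D p b A HA L [] [] eq_refl (Nat.le_0_l D)) as Hlb.
  change (n_dangerous i []) with 0%nat in Hlb. rewrite Nat.sub_0_r in Hlb.
  pose proof (mistake_value_ge D L ltac:(nia)).
  pose proof (HB _ Hvalid).
  rewrite <- HD, plus_INR. simpl. lra.
Qed.
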